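(* Let $\mathcal{P},\mathcal{S}$ be patterns, let $P\in\mathbb{R}^{n\times n}(\mathcal{P})$ be a reversible stochastic matrix with stationary distribution $\boldsymbol{\pi}$, $\hat{\boldsymbol{\pi}}=\boldsymbol{\pi}^{1/2}$ entrywise, and let \[ \mathcal{M}_{P,\boldsymbol{\pi}}=\Big\{X\in\mathbb{R}^{n\times n}_{\mathrm{exact}}(\mathcal{P}\cup\mathcal{S}) : X=X^\top,\ X\hat{\boldsymbol{\pi}}=\hat{\boldsymbol{\pi}},\ X_{ij}>0\text{ if }\{i,j\}\in\mathcal{S},\ X_{ij}=\tfrac{\hat\pi_i}{\hat\pi_j}P_{ij}\text{ if }\{i,j\}\notin\mathcal{S}\Big\}. \] Let $S\in\mathbb{R}^{n\times n}$ be given by $S_{ij}=1$ if $\{i,j\}\in\mathcal{S}$ and $S_{ij}=0$ otherwise. Then for every $X\in\mathcal{M}_{P,\boldsymbol{\pi}}$ the matrix \[ \operatorname{diag}\big((X\odot S)\boldsymbol{\pi}\big)+D_{\hat{\boldsymbol{\pi}}}(X\odot S)D_{\hat{\boldsymbol{\pi}}} \] is invertible.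
   Context: A stochastic matrix is nonnegative with row sums $1$; it is reversible if irreducible and its (unique, positive) stationary distribution $\boldsymbol{\pi}$ satisfies $\pi_iP_{ij}=\pi_jP_{ji}$ for all $i,j$. A pattern is a set of unordered pairs $\{i,j\}$, $1\le i,j\le n$, containing $\{i,i\}$ for all $i$. $\mathbb{R}^{n\times n}(\mathcal{S})$ is the set of real $n\times n$ matrices $\Delta$ with $\Delta_{ij}=\Delta_{ji}=0$ whenever $\{i,j\}\notin\mathcal{S}$; $\mathbb{R}^{n\times n}_{\mathrm{exact}}(\mathcal{S})$ is the set of real $n\times n$ matrices $\Delta$ with ($\Delta_{ij}\ne0$ and $\Delta_{ji}\ne0$) if and only if $\{i,j\}\in\mathcal{S}$. $\odot$ is the entrywise product; $\operatorname{diag}(\mathbf{v})$ and $D_{\mathbf{v}}$ both denote the diagonal matrix with diagonal $\mathbf{v}$. *)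

From HB Require Import structures.
From mathcomp Require Import all_boot all_order all_algebra.
From mathcomp Require Import reals.
Set Implicit Arguments. Unset Strict Implicit. Unset Printing Implicit Defensive.
Import Order.TTheory GRing.Theory Num.Theory.
Local Open Scope ring_scope.

(* A pattern on {0..n-1}: a set of unordered pairs {i,j} containing every {i,i},
   represented as a reflexive symmetric boolean relation. *)
Definition is_pattern n (S : rel 'I_n) : Prop :=
  (forall i, S i i) /\ (forall i j, S i j = S j i).

Definition pattern_union n (S1 S2 : rel 'I_n) : rel 'I_n :=
  fun i j => S1 i j || S2 i j.

Definition mx_pattern (R : realType) n (S : rel 'I_n) (D : 'M[R]_n) : Prop :=
  forall i j, ~~ S i j -> D i j = 0 /\ D j i = 0.

Definition mx_exact_pattern (R : realType) n (S : rel 'I_n) (D : 'M[R]_n) : Prop :=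
  forall i j, (D i j != 0 /\ D j i != 0) <-> S i j.

Definition stochastic (R : realType) n (P : 'M[R]_n) : Prop :=
  (forall i j, 0 <= P i j) /\ (forall i, \sum_j P i j = 1).

Definition irreducible (R : realType) n (P : 'M[R]_n) : Prop :=
  forall i j, exists k : nat, 0 < (P ^+ k) i j.

Definition stationary_distribution (R : realType) n (P : 'M[R]_n) (pi : 'rV[R]_n) : Prop :=
  (forall i, 0 <= pi ord0 i) /\ \sum_i pi ord0 i = 1 /\ pi *m P = pi.

Definition reversible_stochastic (R : realType) n (P : 'M[R]_n) (pi : 'rV[R]_n) : Prop :=
  [/\ stochastic P, irreducible P, stationary_distribution P pi &
      forall i j, pi ord0 i * P i j = pi ord0 j * P j i].

Definition sqrt_vec (R : realType) n (v : 'rV[R]_n) : 'rV[R]_n :=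
  map_mx Num.sqrt v.

Definition hadamard (R : realType) m n (A B : 'M[R]_(m, n)) : 'M[R]_(m, n) :=
  map2_mx *%R A B.

Definition pattern_mx (R : realType) n (S : rel 'I_n) : 'M[R]_n :=
  \matrix_(i, j) (S i j)%:R.

Definition M_set (R : realType) n (PP SS : rel 'I_n) (P : 'M[R]_n) (pi : 'rV[R]_n)
    (X : 'M[R]_n) : Prop :=
  let pih := sqrt_vec pi in
  [/\ mx_exact_pattern (pattern_union PP SS) X,
      X = X^T,
      X *m pih^T = pih^T,
      (forall i j, SS i j -> 0 < X i j) &
      (forall i j, ~~ SS i j -> X i j = pih ord0 i / pih ord0 j * P i j)].

From HB Require Import structures.
From mathcomp Require Import all_boot all_order all_algebra.
From mathcomp Require Import reals ring.
Set Implicit Arguments. Unset Strict Implicit. Unset Printing Implicit Defensive.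
Import Order.TTheory GRing.Theory Num.Theory.
Local Open Scope ring_scope.

(* Write Y = X ⊙ S and q = π^(1/2), so that the matrix is
   M = diag(Y π) + D_q Y D_q with π_i = q_i^2.  Since Y is symmetric,
   2 v M vᵀ = Σ_{i,j} Y_ij (q_j v_i + q_i v_j)^2.  All terms are
   nonnegative because Y ≥ 0, and the diagonal terms Y_ii (2 q_i v_i)^2 vanish
   only for v = 0 because Y_ii > 0 and q > 0: M is positive definite, hence
   invertible.  Positivity of q is the positivity of the stationary
   distribution of an irreducible chain. *)

Lemma quad_formE (R : comPzSemiRingType) n (M : 'M[R]_n) (v : 'rV[R]_n) :
  (v *m M *m v^T) 0 0 = \sum_i \sum_j v 0 i * M i j * v 0 j.
Proof.
rewrite mxE exchange_big; apply: eq_bigr => j _.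
by rewrite !mxE mulr_suml; apply: eq_bigr => i _.
Qed.

Lemma posdef_unitmx (R : realFieldType) n (M : 'M[R]_n) :
  (forall v : 'rV[R]_n, v != 0 -> 0 < (v *m M *m v^T) 0 0) -> M \in unitmx.
Proof.
move=> M_posdef; rewrite unitmxE unitfE; apply/det0P => -[v v_neq0 vM0].
by have := M_posdef v v_neq0; rewrite vM0 mul0mx mxE ltxx.
Qed.

Section DiagScaledSymmetric.

Variables (R : realFieldType) (n : nat) (Y : 'M[R]_n) (p q : 'rV[R]_n).
Hypothesis Y_sym : forall i j, Y i j = Y j i.
Hypothesis p_sqr : forall i, p 0 i = q 0 i ^+ 2.

Local Notation M := (diag_mx (Y *m p^T)^T + diag_mx q *m Y *m diag_mx q).

Lemma diag_scaled_mxE i j :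
  M i j = (i == j)%:R * \sum_k Y i k * p 0 k + q 0 i * Y i j * q 0 j.
Proof.
rewrite mxE mul_mx_diag mul_diag_mx !mxE mulr_natl; congr (_ *+ _ + _).
by apply: eq_bigr => k _; rewrite !mxE.
Qed.

Lemma diag_scaled_quad_form (v : 'rV[R]_n) :
  (v *m M *m v^T) 0 0 *+ 2
  = \sum_i \sum_j Y i j * (q 0 j * v 0 i + q 0 i * v 0 j) ^+ 2.
Proof.
have diag_part : \sum_i \sum_j v 0 i * ((i == j)%:R * \sum_k Y i k * p 0 k) * v 0 j
    = \sum_i \sum_j Y i j * p 0 j * v 0 i ^+ 2.
  apply: eq_bigr => i _; rewrite (bigD1 i) //= [X in _ + X]big1 => [|j ji]; last first.
    by rewrite eq_sym (negbTE ji) mul0r mulr0 mul0r.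
  by rewrite eqxx mul1r addr0 mulrAC -expr2 mulr_sumr; apply: eq_bigr => k _; ring.
(* by symmetry of Y, diag(Y p) supplies both q_j^2 v_i^2 and q_i^2 v_j^2 *)
have swap : \sum_i \sum_j Y i j * p 0 j * v 0 i ^+ 2
    = \sum_i \sum_j Y i j * p 0 i * v 0 j ^+ 2.
  by rewrite exchange_big; apply: eq_bigr => i _; apply: eq_bigr => j _; rewrite Y_sym.
rewrite quad_formE.
under eq_bigr do under eq_bigr do rewrite diag_scaled_mxE mulrDr mulrDl.
rewrite -mulr_natr; under eq_bigr do rewrite big_split.
rewrite big_split /= diag_part mulr_natr mulr2n {1}swap -!big_split /=.
apply: eq_bigr => i _; rewrite -!big_split /=; apply: eq_bigr => j _.
by rewrite !p_sqr; ring.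
Qed.

Hypothesis Y_ge0 : forall i j, 0 <= Y i j.
Hypothesis Y_diag_gt0 : forall i, 0 < Y i i.
Hypothesis q_gt0 : forall i, 0 < q 0 i.

Lemma diag_scaled_posdef (v : 'rV[R]_n) : v != 0 -> 0 < (v *m M *m v^T) 0 0.
Proof.
move=> v_neq0; rewrite -(pmulrn_lgt0 _ (ltn0Sn 1)) diag_scaled_quad_form.
pose T i j := Y i j * (q 0 j * v 0 i + q 0 i * v 0 j) ^+ 2.
rewrite -[\sum_i _]/(\sum_i \sum_j T i j).
have T_ge0 i j : 0 <= T i j by rewrite mulr_ge0 ?sqr_ge0.
rewrite lt_def sumr_ge0 ?andbT => [|i _]; last exact: sumr_ge0.
apply: contra v_neq0 => /eqP sumT0; apply/eqP/rowP => i; rewrite mxE.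
have /psumr_eq0P/(_ i isT) : \sum_j T i j = 0.
  by apply: psumr_eq0P sumT0 i isT => k _; exact: sumr_ge0.
move=> /(_ (fun j _ => T_ge0 i j)) /eqP.
rewrite /T mulf_eq0 (gt_eqF (Y_diag_gt0 i)) sqrf_eq0 -mulr2n mulrn_eq0 /=.
by rewrite mulf_eq0 (gt_eqF (q_gt0 i)) => /eqP.
Qed.

Lemma diag_scaled_unitmx : M \in unitmx.
Proof. exact/posdef_unitmx/diag_scaled_posdef. Qed.

End DiagScaledSymmetric.

Lemma stochastic_exp_ge0 (R : realType) n (P : 'M[R]_n) k :
  stochastic P -> forall i j, 0 <= (P ^+ k) i j.
Proof.
move=> [P_ge0 _]; elim: k => [|k IHk] i j; first by rewrite expr0 mxE ler0n.
by rewrite exprS -mulmxE mxE sumr_ge0 // => l _; rewrite mulr_ge0.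
Qed.

Lemma stationary_mulmx_exp (R : realType) n (P : 'M[R]_n) (pi : 'rV[R]_n) k :
  stationary_distribution P pi -> pi *m P ^+ k = pi.
Proof.
move=> [_ [_ piP]]; elim: k => [|k IHk]; first by rewrite expr0 mulmx1.
by rewrite exprSr -mulmxE mulmxA IHk.
Qed.

Lemma stationary_distribution_gt0 (R : realType) n (P : 'M[R]_n) (pi : 'rV[R]_n) :
  stochastic P -> irreducible P -> stationary_distribution P pi ->
  forall i, 0 < pi 0 i.
Proof.
move=> P_st P_irr pi_st i; have [pi_ge0 [pi_sum1 _]] := pi_st.
have [j /andP[_ pi_j_gt0]] : exists j, true && (0 < pi 0 j).
  by apply: psumr_neq0P => [j _|]; [exact: pi_ge0 | rewrite pi_sum1; exact/eqP/oner_neq0].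
have [k Pk_ji_gt0] := P_irr j i.
have term_ge0 l : 0 <= pi 0 l * (P ^+ k) l i.
  by rewrite mulr_ge0 // stochastic_exp_ge0.
rewrite lt_def pi_ge0 andbT; apply/eqP => pi_i0.
have pi_iE : pi 0 i = \sum_l pi 0 l * (P ^+ k) l i.
  by rewrite -[in LHS](stationary_mulmx_exp k pi_st) mxE.
have /psumr_eq0P/(_ j isT) : \sum_l pi 0 l * (P ^+ k) l i = 0 by rewrite -pi_iE.
by move=> /(_ (fun l _ => term_ge0 l)) /eqP; rewrite mulf_eq0 !gt_eqF.
Qed.

Theorem proposition4p7 (R : realType) (n : nat) (PP SS : rel 'I_n)
    (P : 'M[R]_n) (pi : 'rV[R]_n) :
  is_pattern PP -> is_pattern SS ->
  mx_pattern PP P ->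
  reversible_stochastic P pi ->
  forall X : 'M[R]_n, M_set PP SS P pi X ->
  let XS := hadamard X (pattern_mx R SS) in
  diag_mx (XS *m pi^T)^T + diag_mx (sqrt_vec pi) *m XS *m diag_mx (sqrt_vec pi)
    \in unitmx.
Proof.
move=> _ [SS_refl SS_sym] _ [P_st P_irr pi_st _] X; rewrite /M_set.
move=> [_ X_tr _ X_gt0 _] /=; set XS := hadamard X _.
have pi_gt0 := stationary_distribution_gt0 P_st P_irr pi_st.
have XSE i j : XS i j = X i j * (SS i j)%:R by rewrite !mxE.
apply: diag_scaled_unitmx => [i j|i|i j|i|i].
- by rewrite !XSE SS_sym {1}X_tr mxE.
- by rewrite mxE sqr_sqrtr ?ltW.
- by rewrite XSE; case: (boolP (SS i j)) => [/X_gt0/ltW|_]; rewrite ?mulr1 ?mulr0.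
- by rewrite XSE SS_refl mulr1 X_gt0.
- by rewrite mxE sqrtr_gt0.
Qed.
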